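(* Let $(\mathfrak{g},\langle\cdot,\cdot\rangle)$ be a $3$-dimensional Lie algebra with a Lorentzian scalar product, and let $\mathfrak{h}$ be a codimension one Lie subalgebra. Then: (i) if $\mathfrak{h}$ is abelian, $(\langle\cdot,\cdot\rangle,\mathfrak{h})$ is a Kundt pair if and only if $\mathfrak{h}$ is degenerate and $\mathrm{ad}_e(\mathfrak{g})\subset\mathfrak{h}$ for a generator $e$ of $\mathfrak{h}^\perp$; (ii) if $\mathfrak{h}$ is non-abelian, $(\langle\cdot,\cdot\rangle,\mathfrak{h})$ is a Kundt pair if and only if $\mathfrak{h}^\perp=[\mathfrak{h},\mathfrak{h}]$ and $\mathrm{ad}_e(\mathfrak{g})\subset\mathfrak{h}$ for a generator $e$ of $\mathfrak{h}^\perp$.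
   Context: The Levi-Civita product on $(\mathfrak{g},\langle\cdot,\cdot\rangle)$ is defined by $2\langle u\bullet v,w\rangle=\langle[u,v],w\rangle+\langle[w,u],v\rangle+\langle[w,v],u\rangle$. A Kundt pair on $\mathfrak{g}$ is a pair $(\langle\cdot,\cdot\rangle,\mathfrak{h})$ where $\langle\cdot,\cdot\rangle$ is a Lorentzian scalar product on $\mathfrak{g}$ and $\mathfrak{h}$ is a codimension one subalgebra, degenerate for $\langle\cdot,\cdot\rangle$, stable by $\bullet$ ($u\bullet v\in\mathfrak{h}$ for $u,v\in\mathfrak{h}$), and such that $e\bullet e=0$ for every $e\in\mathfrak{h}^\perp$. *)

(* A 3-dimensional real Lie algebra is modelled as the row
   space 'rV[R]_3 (R : realType) with a bilinear alternating bracket satisfying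
   Jacobi; the scalar product is given by a symmetric Gram matrix G; a
   subspace h is given by a matrix H (row space, mxalgebra). *)
From HB Require Import structures.
From mathcomp Require Import all_boot all_order all_algebra.
From mathcomp Require Import reals.
Set Implicit Arguments. Unset Strict Implicit. Unset Printing Implicit Defensive.
Import Order.TTheory GRing.Theory Num.Theory.
Local Open Scope ring_scope.

Section Defs.
Variable R : realType.
Notation vec := 'rV[R]_3.

Definition is_lie_bracket (br : vec -> vec -> vec) : Prop :=
  [/\ (forall (a : R) u v w, br (a *: u + v) w = a *: br u w + br v w),
      (forall (a : R) u v w, br w (a *: u + v) = a *: br w u + br w v),
      (forall u, br u u = 0) &
      (forall u v w, br u (br v w) + br v (br w u) + br w (br u v) = 0)].

Definition bform (G : 'M[R]_3) (u v : vec) : R := (u *m G *m v^T) 0 0.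

Definition lorentzian (G : 'M[R]_3) : Prop :=
  G^T = G /\ exists P : 'M[R]_3, P \in unitmx /\
     P *m G *m P^T = diag_mx (\row_(i < 3) (if i == 0 :> nat then -1 else 1)).

Definition in_sub (H : 'M[R]_3) (u : vec) : Prop := (u <= H)%MS.

Definition subalgebra (br : vec -> vec -> vec) (H : 'M[R]_3) : Prop :=
  forall u v, in_sub H u -> in_sub H v -> in_sub H (br u v).

Definition codim_one (H : 'M[R]_3) : Prop := \rank H = 2%N.

Definition abelian_sub (br : vec -> vec -> vec) (H : 'M[R]_3) : Prop :=
  forall u v, in_sub H u -> in_sub H v -> br u v = 0.

Definition degenerate (G H : 'M[R]_3) : Prop :=
  exists u, u != 0 /\ in_sub H u /\ forall v, in_sub H v -> bform G u v = 0.

Definition in_perp (G H : 'M[R]_3) (w : vec) : Prop :=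
  forall v, in_sub H v -> bform G w v = 0.

(* derived algebra [h,h]: span of brackets of a spanning family (the rows of H) *)
Definition derived (br : vec -> vec -> vec) (H : 'M[R]_3) : 'M[R]_3 :=
  (\sum_(i < 3) \sum_(j < 3) <<br (row i H) (row j H)>>)%MS.

Definition perp_generator (G H : 'M[R]_3) (e : vec) : Prop :=
  [/\ e != 0, in_perp G H e & forall w, in_perp G H w -> exists a : R, w = a *: e].

Definition ad_in (br : vec -> vec -> vec) (H : 'M[R]_3) (e : vec) : Prop :=
  forall x, in_sub H (br e x).

(* Levi-Civita product: the unique x with
   2<x,w> = <[u,v],w> + <[w,u],v> + <[w,v],u> for all w (G nondegenerate). *)
Definition lcprod (br : vec -> vec -> vec) (G : 'M[R]_3) (u v : vec) : vec :=
  (\row_(j < 3) ((bform G (br u v) (delta_mx 0 j)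
                 + bform G (br (delta_mx 0 j) u) v
                 + bform G (br (delta_mx 0 j) v) u) / 2)) *m invmx G.

Definition kundt_pair (br : vec -> vec -> vec) (G H : 'M[R]_3) : Prop :=
  lorentzian G /\ codim_one H /\ subalgebra br H /\ degenerate G H /\
  (forall u v, in_sub H u -> in_sub H v -> in_sub H (lcprod br G u v)) /\
  (forall e, in_perp G H e -> lcprod br G e e = 0).

End Defs.

From HB Require Import structures.
From mathcomp Require Import all_boot all_order all_algebra.
From mathcomp Require Import reals.
From mathcomp Require Import ring lra.
Set Implicit Arguments. Unset Strict Implicit. Unset Printing Implicit Defensive.
Import Order.TTheory GRing.Theory Num.Theory.
Local Open Scope ring_scope.

(* The scalar product is nondegenerate and h has codimension one, so h^⊥ is a
   line R e and h = e^⊥; in particular h is degenerate iff e ∈ h.  Koszul's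
   formula gives <e•e, x> = <[x,e], e>, so e•e = 0 iff ad_e(g) ⊂ h; for u, v in
   h, where [u,v] ∈ h is orthogonal to e, it gives
   2<u•v, e> = <[e,u], v> + <[e,v], u>, so h is •-stable iff ad_e is skew on h.
   When h is abelian and contains e, ad_e vanishes on h.  When h is not
   abelian, skewness and h = span(e, u) force [e,u] ⊥ h, hence [h,h] ⊂ h^⊥,
   with equality as h^⊥ is a line and [h,h] ≠ 0; conversely [h,h] = h^⊥ ⊂ h
   makes every <[e,u], v> vanish. *)

Lemma form_row_sum_delta (R : pzRingType) n (f : 'rV[R]_n -> R) :
    (forall a u v, f (a *: u + v) = a * f u + f v) ->
  forall u, f u = \sum_j u 0 j * f (delta_mx 0 j).
Proof.
move=> linf u; have f0 : f 0 = 0.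
  by have := linf (-1) 0 0; rewrite scaler0 addr0 mulN1r addNr.
rewrite {1}[u]row_sum_delta; elim/big_rec2: _ => [//|j s1 s2 _ <-]; exact: linf.
Qed.

Section Form.
Variable R : realType.
Implicit Types (G H : 'M[R]_3) (u v w : 'rV[R]_3).

Lemma bformDl G a u v w :
  bform G (a *: u + v) w = a * bform G u w + bform G v w.
Proof. by rewrite /bform !mulmxDl -!scalemxAl !mxE. Qed.

Lemma bformDr G a u v w :
  bform G w (a *: u + v) = a * bform G w u + bform G w v.
Proof. by rewrite /bform linearD linearZ /= mulmxDr -scalemxAr !mxE. Qed.

Lemma bformZl G a u w : bform G (a *: u) w = a * bform G u w.
Proof. by rewrite /bform -!scalemxAl mxE. Qed.

Lemma bformZr G a u w : bform G w (a *: u) = a * bform G w u.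
Proof. by rewrite /bform linearZ /= -scalemxAr mxE. Qed.

Lemma bform0l G w : bform G 0 w = 0.
Proof. by rewrite /bform !mul0mx mxE. Qed.

Lemma bformNl G u w : bform G (- u) w = - bform G u w.
Proof. by rewrite /bform !mulNmx mxE. Qed.

Lemma bformC G u v : G^T = G -> bform G u v = bform G v u.
Proof.
move=> sG; have trE (M : 'M[R]_1) : M 0 0 = M^T 0 0 by rewrite mxE.
by rewrite /bform [LHS]trE !trmx_mul trmxK sG mulmxA.
Qed.

Lemma in_perpZ G H a w : in_perp G H w -> in_perp G H (a *: w).
Proof. by move=> hw v hv; rewrite bformZl hw ?mulr0. Qed.

Lemma in_perpE G H w : in_perp G H w <-> w *m G *m H^T = 0.
Proof.
split=> [hw | hw v /submxP [D ->]]; last first.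
  by rewrite /bform trmx_mul mulmxA hw mul0mx mxE.
apply/rowP => j; rewrite [RHS]mxE -(hw _ (row_sub j H)) /bform !mxE.
by apply: eq_bigr => k _; rewrite !mxE.
Qed.

Lemma bform_invmx G c w :
  G \in unitmx -> bform G (c *m invmx G) w = \sum_j c 0 j * w 0 j.
Proof.
by move=> uG; rewrite /bform mulmxKV // mxE; apply: eq_bigr => j _; rewrite mxE.
Qed.

Lemma lorentzian_unitmx G : lorentzian G -> G \in unitmx.
Proof.
case=> _ [P [uP PGP]]; have: P *m G *m P^T \in unitmx.
  rewrite PGP unitmxE det_diag !big_ord_recl big_ord0 !mxE /=.
  by rewrite !mulr1 unitrN unitr1.
by rewrite !unitmx_mul => /andP[/andP[_ ->]].
Qed.

Lemma bform_nondeg G u : G \in unitmx -> (forall w, bform G u w = 0) -> u = 0.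
Proof.
move=> uG hu; have /in_perpE : in_perp G 1%:M u by move=> v _; exact: hu.
by rewrite trmx1 mulmx1 => uG0; rewrite -(mulmxK uG u) uG0 mul0mx.
Qed.

Lemma degenerate_iff_in_sub G H e :
  perp_generator G H e -> degenerate G H <-> in_sub H e.
Proof.
case=> en0 pe ge; split=> [[u [un0 [uH /ge [a ua]]]] | eH]; last by exists e.
have an0 : a != 0 by apply: contraNneq un0 => a0; rewrite ua a0 scale0r.
by rewrite -(scalerK an0 e) -ua; apply: scalemx_sub.
Qed.

End Form.

Section LieBracket.
Variable R : realType.
Variable br : 'rV[R]_3 -> 'rV[R]_3 -> 'rV[R]_3.
Hypothesis hbr : is_lie_bracket br.

Lemma brDl a u v w : br (a *: u + v) w = a *: br u w + br v w.
Proof. by case: hbr. Qed.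

Lemma brDr a u v w : br w (a *: u + v) = a *: br w u + br w v.
Proof. by case: hbr. Qed.

Lemma brxx u : br u u = 0.
Proof. by case: hbr. Qed.

Lemma br0l w : br 0 w = 0.
Proof. by have := brDl (-1) 0 0 w; rewrite scaler0 addr0 scaleN1r addNr. Qed.

Lemma br0r w : br w 0 = 0.
Proof. by have := brDr (-1) 0 0 w; rewrite scaler0 addr0 scaleN1r addNr. Qed.

Lemma brZl a u w : br (a *: u) w = a *: br u w.
Proof. by rewrite -[a *: u]addr0 brDl br0l addr0. Qed.

Lemma brZr a u w : br w (a *: u) = a *: br w u.
Proof. by rewrite -[a *: u]addr0 brDr br0r addr0. Qed.

Lemma brC u v : br u v = - br v u.
Proof.
have := brxx (1 *: u + v); rewrite brDl !brDr !scale1r !brxx.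
by rewrite add0r addr0 => /eqP; rewrite addr_eq0 => /eqP.
Qed.

Lemma br_suml n (c : 'I_n -> R) (d : 'I_n -> 'rV[R]_3) w :
  br (\sum_i c i *: d i) w = \sum_i c i *: br (d i) w.
Proof. by elim/big_rec2: _ => [|i s1 s2 _ <-]; rewrite ?br0l ?brDl. Qed.

Lemma br_sumr n (c : 'I_n -> R) (d : 'I_n -> 'rV[R]_3) w :
  br w (\sum_i c i *: d i) = \sum_i c i *: br w (d i).
Proof. by elim/big_rec2: _ => [|i s1 s2 _ <-]; rewrite ?br0r ?brDr. Qed.

End LieBracket.

Definition koszul (R : realType) (br : 'rV[R]_3 -> 'rV[R]_3 -> 'rV[R]_3)
    (G : 'M[R]_3) (u v w : 'rV[R]_3) : R :=
  bform G (br u v) w + bform G (br w u) v + bform G (br w v) u.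

Section LeviCivita.
Variable R : realType.
Variable br : 'rV[R]_3 -> 'rV[R]_3 -> 'rV[R]_3.
Hypothesis hbr : is_lie_bracket br.
Variable G : 'M[R]_3.
Hypothesis uG : G \in unitmx.

Lemma bform_lcprod u v w : bform G (lcprod br G u v) w = koszul br G u v w / 2.
Proof.
have lin_koszul a x y :
    koszul br G u v (a *: x + y) / 2 =
    a * (koszul br G u v x / 2) + koszul br G u v y / 2.
  by rewrite /koszul bformDr !(brDl hbr) !bformDl; ring.
have /= -> :=
  form_row_sum_delta (f := fun x => koszul br G u v x / 2) lin_koszul w.
rewrite /lcprod bform_invmx //; apply: eq_bigr => j _.
by rewrite mxE mulrC /koszul.
Qed.

Lemma koszul_self u w : koszul br G u u w = - (bform G (br u w) u *+ 2).
Proof.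
by rewrite /koszul (brxx hbr) bform0l add0r (brC hbr w) bformNl mulr2n opprD.
Qed.

End LeviCivita.

Definition perp_mx (R : realType) (G H : 'M[R]_3) : 'M[R]_3 := kermx (G *m H^T).

Section Orthogonal.
Variable R : realType.
Variable G : 'M[R]_3.
Hypothesis uG : G \in unitmx.
Hypothesis sG : G^T = G.
Implicit Types (H : 'M[R]_3) (u w : 'rV[R]_3).

Lemma in_perp_mx H w : in_perp G H w <-> (w <= perp_mx G H)%MS.
Proof. by rewrite in_perpE /perp_mx sub_kermx mulmxA; split=> [->|/eqP]. Qed.

Lemma mxrank_perp H : \rank (perp_mx G H) = (3 - \rank H)%N.
Proof. by rewrite mxrank_ker (eqmxMfull _ _) ?row_full_unit // mxrank_tr. Qed.

Lemma perp_mxK H : (perp_mx G (perp_mx G H) :=: H)%MS.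
Proof.
have sub_pp : (H <= perp_mx G (perp_mx G H))%MS.
  have : perp_mx G H *m G *m H^T = 0 by rewrite -mulmxA mulmx_ker.
  move: (perp_mx G H) => K KGH; rewrite sub_kermx; apply/eqP/trmx_inj.
  by rewrite trmx0 !trmx_mul trmxK sG.
have := mxrank_leqif_eq sub_pp; rewrite !mxrank_perp subKn ?rank_leq_col //.
by move=> /leqif_refl /eqmxP /eqmx_sym.
Qed.

Lemma in_sub_perpP H u :
  in_sub H u <-> (forall w, in_perp G H w -> bform G u w = 0).
Proof.
split=> [uH w hw | hu]; first by rewrite bformC //; apply: hw.
have /in_perp_mx : in_perp G (perp_mx G H) u by move=> v /in_perp_mx; exact: hu.
by rewrite perp_mxK.
Qed.

Lemma in_sub_perp_generator H e u :
  perp_generator G H e -> in_sub H u <-> bform G u e = 0.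
Proof.
case=> _ pe ge; split=> [/in_sub_perpP -> // | ue0].
by apply/in_sub_perpP => w /ge [a ->]; rewrite bformZr ue0 mulr0.
Qed.

Variable H : 'M[R]_3.
Hypothesis rH : codim_one H.

Lemma perp_generator_exists : exists e, perp_generator G H e.
Proof.
have rK : \rank (perp_mx G H) = 1%N by rewrite mxrank_perp rH.
exists (nz_row (perp_mx G H)); set e := nz_row _.
have eK : (e <= perp_mx G H)%MS := nz_row_sub _.
have en0 : e != 0 by rewrite nz_row_eq0 -mxrank_eq0 rK.
split=> //; first exact/in_perp_mx.
have := mxrank_leqif_eq eK; rewrite rank_rV en0 rK => /leqif_refl /andP[_ Ke].
by move=> w /in_perp_mx /submx_trans /(_ Ke) /sub_rVP.
Qed.

Lemma in_sub_span e u w :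
    e != 0 -> in_sub H e -> in_sub H u -> ~~ (u <= e)%MS ->
  in_sub H w -> exists a b, w = a *: e + b *: u.
Proof.
move=> en0 eH uH nue wH.
have euH : ((e + u)%MS <= H)%MS by rewrite addsmx_sub eH.
have := mxrank_leqif_sup (addsmxSl e u).
rewrite addsmx_sub submx_refl (negbTE nue) rank_rV en0 => /ltn_leqif lt_e_eu.
have le_eu_H := mxrank_leqif_eq euH; rewrite rH in le_eu_H.
have rank_eu : \rank (e + u)%MS = 2%N.
  by apply/eqP; rewrite eqn_leq lt_e_eu le_eu_H.
move: le_eu_H; rewrite rank_eu => /leqif_refl /andP[_ /(submx_trans wH)].
case/sub_addsmxP=> [[D1 D2] /= ->]; exists (D1 0 0), (D2 0 0).
by rewrite {1}[D1]mx11_scalar {1}[D2]mx11_scalar !mul_scalar_mx.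
Qed.

End Orthogonal.

Section Derived.
Variable R : realType.
Variable br : 'rV[R]_3 -> 'rV[R]_3 -> 'rV[R]_3.
Variable H : 'M[R]_3.

Lemma br_derived u v :
  is_lie_bracket br -> in_sub H u -> in_sub H v -> (br u v <= derived br H)%MS.
Proof.
move=> hbr /submxP [D1 ->] /submxP [D2 ->].
rewrite !mulmx_sum_row (br_suml hbr).
apply: summx_sub => i _; rewrite scalemx_sub // (br_sumr hbr).
apply: summx_sub => j _; rewrite scalemx_sub //.
by apply: (sumsmx_sup i) => //; apply: (sumsmx_sup j) => //; rewrite genmxE.
Qed.

Lemma derived_sub : subalgebra br H -> (derived br H <= H)%MS.
Proof.
move=> hsub; apply/sumsmx_subP => i _; apply/sumsmx_subP => j _.
by rewrite genmxE; apply: hsub; apply: row_sub.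
Qed.

End Derived.

Definition ad_skew (R : realType) (br : 'rV[R]_3 -> 'rV[R]_3 -> 'rV[R]_3)
    (G H : 'M[R]_3) (e : 'rV[R]_3) : Prop :=
  forall u v, in_sub H u -> in_sub H v ->
    bform G (br e u) v + bform G (br e v) u = 0.

Section Kundt.
Variable R : realType.
Variable br : 'rV[R]_3 -> 'rV[R]_3 -> 'rV[R]_3.
Hypothesis hbr : is_lie_bracket br.
Variables G H : 'M[R]_3.
Hypothesis hG : lorentzian G.
Hypothesis hH : codim_one H.
Hypothesis hsub : subalgebra br H.
Variable e : 'rV[R]_3.
Hypothesis ge : perp_generator G H e.

Let uG : G \in unitmx := lorentzian_unitmx hG.
Let sG : G^T = G := proj1 hG.
Let in_sub_e u : in_sub H u <-> bform G u e = 0 :=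
  in_sub_perp_generator uG sG u ge.

Lemma lcprod_self_eq0_iff :
  (forall e', in_perp G H e' -> lcprod br G e' e' = 0) <-> ad_in br H e.
Proof.
have [_ pe gen] := ge; split=> [self0 x | ade e' /gen [a ->]].
  apply/in_sub_e; have := bform_lcprod hbr uG e e x.
  by rewrite self0 // bform0l koszul_self //; lra.
apply: (bform_nondeg uG) => w.
rewrite bform_lcprod // koszul_self // (brZl hbr).
by rewrite bformC // (in_perpZ a pe (scalemx_sub a (ade w))) mul0rn oppr0 mul0r.
Qed.

Lemma lcprod_stable_iff :
  (forall u v, in_sub H u -> in_sub H v -> in_sub H (lcprod br G u v)) <->
  ad_skew br G H e.
Proof.
have [_ pe _] := ge.
suff pointwise u v : in_sub H u -> in_sub H v ->
    in_sub H (lcprod br G u v) <-> bform G (br e u) v + bform G (br e v) u = 0.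
  by split=> stable u v uH vH; apply/(pointwise u v uH vH); exact: stable.
move=> uH vH; have uv_e : bform G (br u v) e = 0.
  by rewrite bformC // pe //; exact: hsub.
rewrite in_sub_e bform_lcprod // /koszul uv_e add0r.
by split=> skew; lra.
Qed.

Lemma kundt_pairE :
  kundt_pair br G H <-> [/\ in_sub H e, ad_skew br G H e & ad_in br H e].
Proof.
rewrite /kundt_pair (degenerate_iff_in_sub ge).
rewrite lcprod_stable_iff lcprod_self_eq0_iff.
by split=> [[_ [_ [_ [? [? ?]]]]] | [? ? ?]].
Qed.

Lemma ad_skew_bracket_perp : in_sub H e -> ad_skew br G H e ->
  forall u v, in_sub H u -> in_sub H v -> in_perp G H (br u v).
Proof.
move=> eH skew; have [en0 pe _] := ge.
have ad_perp u : in_sub H u -> in_perp G H (br e u).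
  move=> uH; case: (boolP (u <= e)%MS) => [/sub_rVP [a ->] | nue].
    by rewrite (brZr hbr) (brxx hbr) scaler0 -(scale0r e); exact: in_perpZ.
  move=> w /(in_sub_span hH en0 eH uH nue) [a [b ->]].
  have eu_e : bform G (br e u) e = 0 by rewrite bformC // pe //; exact: hsub.
  have eu_u : bform G (br e u) u = 0 by have := skew u u uH uH; lra.
  by rewrite bformDr !bformZr eu_e eu_u !mulr0 addr0.
move=> u v uH vH; case: (boolP (u <= e)%MS) => [/sub_rVP [a ->] | nue].
  by rewrite (brZl hbr); apply/in_perpZ/ad_perp.
have [a [b ->]] := in_sub_span hH en0 eH uH nue vH.
rewrite (brDr hbr) !(brZr hbr) (brxx hbr) scaler0 addr0 (brC hbr u e).
by rewrite scalerN -scaleNr; apply/in_perpZ/ad_perp.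
Qed.

Lemma derived_eq_perp :
    (forall u v, in_sub H u -> in_sub H v -> in_perp G H (br u v)) ->
    ~ abelian_sub br H ->
  forall w, in_perp G H w <-> (w <= derived br H)%MS.
Proof.
move=> br_perp nab; have [_ pe gen] := ge.
have e_derived : (e <= derived br H)%MS.
  case: (boolP (e <= derived br H)%MS) => // e_nd; case: nab => u v uH vH.
  have [a uv] := gen _ (br_perp u v uH vH).
  have [a0 | an0] := eqVneq a 0; first by rewrite uv a0 scale0r.
  case/negP: e_nd; rewrite -(scalerK an0 e) -uv scalemx_sub //.
  exact: br_derived.
have derived_perp : (derived br H <= perp_mx G H)%MS.
  apply/sumsmx_subP => i _; apply/sumsmx_subP => j _.
  by rewrite genmxE; apply/in_perp_mx/br_perp; apply: row_sub.
split=> [/gen [a ->] | wd]; first exact: scalemx_sub.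
exact/in_perp_mx/(submx_trans wd).
Qed.

End Kundt.

Theorem proposition5p1 (R : realType) (br : 'rV[R]_3 -> 'rV[R]_3 -> 'rV[R]_3)
  (G H : 'M[R]_3) :
  is_lie_bracket br -> lorentzian G -> codim_one H -> subalgebra br H ->
  (abelian_sub br H ->
     (kundt_pair br G H <->
      degenerate G H /\ exists e, perp_generator G H e /\ ad_in br H e)) /\
  (~ abelian_sub br H ->
     (kundt_pair br G H <->
      (forall w, in_perp G H w <-> (w <= derived br H)%MS) /\
      exists e, perp_generator G H e /\ ad_in br H e)).
Proof.
move=> hbr hG hH hsub; have kundtE := kundt_pairE hbr hG hH hsub.
have [e ge] := perp_generator_exists (lorentzian_unitmx hG) hH.
split=> [ab | nab]; split.
- case/(kundtE e ge) => eH _ ade.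
  by split; [exact/(degenerate_iff_in_sub ge) | exists e].
- case=> deg [e' [ge' ade']]; have /(degenerate_iff_in_sub ge') e'H := deg.
  by apply/(kundtE e' ge'); split=> // u v uH vH; rewrite !ab ?bform0l ?addr0.
- case/(kundtE e ge) => eH skew ade; split; last by exists e.
  have br_perp := ad_skew_bracket_perp hbr hG hH hsub ge eH skew.
  exact: derived_eq_perp ge br_perp nab.
- case=> perp_derived [e' [ge' ade']].
  have e'H : in_sub H e'.
    have [_ pe' _] := ge'.
    by apply: submx_trans (derived_sub hsub); apply/perp_derived.
  have ad_perp u : in_sub H u -> in_perp G H (br e' u).
    by move=> uH; apply/perp_derived; apply: br_derived.
  apply/(kundtE e' ge'); split=> // u v uH vH.
  by rewrite ad_perp // ad_perp // addr0.
Qed.
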